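(* Let $\mathcal{R}$ be a consistent set of probabilistic constraints over $\mathcal{L}$ and $(\mathcal{R}_i)_{i\ge1}$ a sequence of consistent sets of probabilistic constraints over $\mathcal{L}$ such that $\mathrm{Mod}(\mathcal{R}_i)$ converges to $\mathrm{Mod}(\mathcal{R})$ in the Blaschke distance. Then the sequence $(P^{ME}_{\mathcal{R}_i})$ converges to $P^{ME}_{\mathcal{R}}$.
   Context: $\mathcal{L}$ is a propositional language over a finite set of variables; $\mathrm{Int}(\mathcal{L})$ is the set of truth assignments. A probability distribution over $\mathcal{L}$ is $P:\mathrm{Int}(\mathcal{L})\to[0,1]$ summing to $1$, regarded as a vector in $\mathbb{R}^{\mathrm{Int}(\mathcal{L})}$ with the Euclidean norm; $P(\phi)=\sum_{v\models\phi}P(v)$. A probabilistic constraint is $c_0+\sum_{i=1}^k c_i\,\mathsf{p}(\phi_i)\ge 0$ ($c_i\in\mathbb{R}$, $\phi_i\in\mathcal{L}$), satisfied by $P$ iff $c_0+\sum_ic_iP(\phi_i)\ge0$; $\mathrm{Mod}(\mathcal{R})$ is the set of distributions satisfying all constraints of $\mathcal{R}$, and $\mathcal{R}$ is consistent iff it is nonempty; then $P^{ME}_{\mathcal{R}}$ is the unique element of $\mathrm{Mod}(\mathcal{R})$ maximizing $H(P)=-\sum_vP(v)\log P(v)$. The Blaschke distance between convex sets $S_1,S_2$ of distributions is $\inf\{\delta\in\mathbb{R}\mid \forall P_1\in S_1\exists P_2\in S_2: \|P_1-P_2\|\le\delta \text{ and } \forall P_2\in S_2\exists P_1\in S_1:\|P_2-P_1\|\le\delta\}$.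 *)

From HB Require Import structures.
From mathcomp Require Import all_boot all_order all_algebra.
From mathcomp Require Import all_classical all_reals all_analysis.
Set Implicit Arguments. Unset Strict Implicit. Unset Printing Implicit Defensive.
Import Order.TTheory GRing.Theory Num.Theory numFieldNormedType.Exports.
Local Open Scope classical_set_scope.
Local Open Scope ring_scope.

Inductive form (n : nat) : Type :=
  | FVar of 'I_n
  | FTop
  | FBot
  | FNeg of form n
  | FAnd of form n & form n
  | FOr of form n & form n
  | FImp of form n & form n.

Definition interp (n : nat) := {ffun 'I_n -> bool}.

Fixpoint models (n : nat) (v : interp n) (f : form n) : bool :=
  match f with
  | FVar i => v i
  | FTop => true
  | FBot => false
  | FNeg g => ~~ models v g
  | FAnd g h => models v g && models v h
  | FOr g h => models v g || models v h
  | FImp g h => models v g ==> models v h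
  end.

Definition is_distr (R : realType) (n : nat) (P : interp n -> R) : Prop :=
  (forall v, 0 <= P v) /\ \sum_(v : interp n) P v = 1.

Definition prob (R : realType) (n : nat) (P : interp n -> R) (f : form n) : R :=
  \sum_(v : interp n | models v f) P v.

(* Probabilistic constraint  c0 + sum_i c_i p(phi_i) >= 0. *)
Record constraint (R : realType) (n : nat) := Constraint {
  c_const : R;
  c_terms : seq (R * form n) }.

Definition satisfies (R : realType) (n : nat) (P : interp n -> R)
  (c : constraint R n) : Prop :=
  0 <= c_const c + \sum_(t <- c_terms c) t.1 * prob P t.2.

Definition Mod (R : realType) (n : nat) (Rs : set (constraint R n))
  : set (interp n -> R) :=
  [set P | is_distr P /\ forall c, Rs c -> satisfies P c].

Definition consistent (R : realType) (n : nat) (Rs : set (constraint R n)) : Prop :=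
  Mod Rs !=set0.

Definition entropy (R : realType) (n : nat) (P : interp n -> R) : R :=
  - \sum_(v : interp n) (if P v == 0 then 0 else P v * ln (P v)).

Definition is_ME (R : realType) (n : nat) (Rs : set (constraint R n))
  (P : interp n -> R) : Prop :=
  Mod Rs P /\ forall Q, Mod Rs Q -> entropy Q <= entropy P.

Definition eucl_dist (R : realType) (n : nat) (P Q : interp n -> R) : R :=
  Num.sqrt (\sum_(v : interp n) (P v - Q v) ^+ 2).

Definition blaschke (R : realType) (n : nat) (S1 S2 : set (interp n -> R)) : R :=
  inf [set d : R |
         (forall P1, S1 P1 -> exists P2, S2 P2 /\ eucl_dist P1 P2 <= d) /\
         (forall P2, S2 P2 -> exists P1, S1 P1 /\ eucl_dist P2 P1 <= d)].

From HB Require Import structures.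
From mathcomp Require Import all_boot all_order all_algebra.
From mathcomp Require Import all_classical all_reals all_analysis.
From mathcomp Require Import ring lra.
Import Order.TTheory GRing.Theory Num.Theory numFieldNormedType.Exports.
Local Open Scope classical_set_scope.
Local Open Scope ring_scope.

(* Two properties of x ln x drive the proof. Entropy is 1/2-Hoelder on the
   simplex, |H P - H Q| <= 2 |Int(L)| sqrt |P - Q|, and it is strongly concave:
   the pointwise Hellinger bound x ln (x/m) >= 2 (x - sqrt (x m)) gives
   H ((P + Q)/2) - (H P + H Q)/2 >= |P - Q|^2 / 16. Hence if P0 maximizes H on
   the convex set Mod(R), then |P0 - Q|^2 <= 8 (H P0 - H Q) for all Q in Mod(R).
   If Mod(R_i) and Mod(R) are within d of each other, pick Q in Mod(R_i) within
   d of P0 and Q' in Mod(R) within d of P_i; then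
   H P0 <= H Q + c sqrt d <= H P_i + c sqrt d <= H Q' + 2 c sqrt d,
   so |P0 - Q'|^2 = O(sqrt d) and |P_i - P0| <= d + |Q' - P0| = O(d^(1/4)). *)

Section XlnX.
Context {R : realType}.
Implicit Types a b m x : R.

Lemma ln_le_subr1 [x] : 0 < x -> ln x <= x - 1.
Proof.
move=> x_gt0; have := @le_ln1Dx R (x - 1); rewrite addrCA subrr addr0.
by apply; lra.
Qed.

Lemma xlnx_sub_xlnm_ge [x m] : 0 <= x -> 0 < m ->
  2 * (x - Num.sqrt x * Num.sqrt m) <= x * ln x - x * ln m.
Proof.
move=> x_ge0 m_gt0; have [->|x_neq0] := eqVneq x 0.
  by rewrite sqrtr0 !mul0r subrr mulr0.
have x_gt0 : 0 < x by rewrite lt_def x_neq0.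
have sx_gt0 : 0 < Num.sqrt x by rewrite sqrtr_gt0.
have sm_gt0 : 0 < Num.sqrt m by rewrite sqrtr_gt0.
set sx := Num.sqrt x in sx_gt0 *; set sm := Num.sqrt m in sm_gt0 *.
have := ler_wpM2l (ltW x_gt0) (ln_le_subr1 (divr_gt0 sm_gt0 sx_gt0)).
have x_sqr : x = sx ^+ 2 by rewrite sqr_sqrtr // ltW.
have m_sqr : m = sm ^+ 2 by rewrite sqr_sqrtr // ltW.
clearbody sx sm; subst x m; rewrite ln_div ?posrE // !lnXn //.
have -> : sx ^+ 2 * (sm / sx - 1) = sx * sm - sx ^+ 2 by field; rewrite gt_eqF.
rewrite !mulr2n; lra.
Qed.

Lemma xlnx_ge [x] : 0 <= x -> - (2 * Num.sqrt x) <= x * ln x.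
Proof.
move=> x_ge0; have := xlnx_sub_xlnm_ge x_ge0 ltr01.
rewrite ln1 sqrtr1 mulr0 subr0 mulr1; lra.
Qed.

Lemma hellinger_midpoint_ge [a b m] : 0 <= a <= 1 -> 0 <= b <= 1 -> 0 <= m ->
  2 * m ^+ 2 = a ^+ 2 + b ^+ 2 ->
  (a ^+ 2 - b ^+ 2) ^+ 2 / 8 <= 2 * (a ^+ 2 + b ^+ 2) - 2 * (m * (a + b)).
Proof.
move=> /andP[a_ge0 a_le1] /andP[b_ge0 b_le1] m_ge0 m_sqr.
(* The right-hand side exceeds [(a - b)^2 / 2] by exactly [(2 m - a - b)^2 / 2]. *)
have gap : (a - b) ^+ 2 / 2 <= 2 * (a ^+ 2 + b ^+ 2) - 2 * (m * (a + b)).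
  have := sqr_ge0 (2 * m - (a + b)); nra.
have : (a ^+ 2 - b ^+ 2) ^+ 2 <= 4 * (a - b) ^+ 2.
  have -> : (a ^+ 2 - b ^+ 2) ^+ 2 = (a - b) ^+ 2 * (a + b) ^+ 2 by ring.
  rewrite [4 * _]mulrC; apply: ler_wpM2l; first exact: sqr_ge0.
  rewrite expr2; nra.
lra.
Qed.

Lemma sqr_le_xlnx_midpoint a b : 0 <= a <= 1 -> 0 <= b <= 1 ->
  (a - b) ^+ 2 / 8 <= a * ln a + b * ln b - 2 * ((a + b) / 2 * ln ((a + b) / 2)).
Proof.
move=> /[dup] a01 /andP[a_ge0 a_le1] /[dup] b01 /andP[b_ge0 b_le1].
have [ab0|ab_neq0] := eqVneq (a + b) 0.
  have [-> ->] : a = 0 /\ b = 0 by split; lra.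
  by rewrite addr0 !mul0r !mulr0 subr0 addr0 expr0n /= mul0r.
set m := (a + b) / 2.
have m_gt0 : 0 < m by rewrite divr_gt0 // lt_def ab_neq0 addr_ge0.
have ha := xlnx_sub_xlnm_ge a_ge0 m_gt0; have hb := xlnx_sub_xlnm_ge b_ge0 m_gt0.
have mlnm : 2 * (m * ln m) = a * ln m + b * ln m.
  by rewrite mulrA -mulrDl /m; congr (_ * _); field.
have sqrt_unit (y : R) : 0 <= y <= 1 -> 0 <= Num.sqrt y <= 1.
  by case/andP=> ? ?; rewrite sqrtr_ge0 -sqrtr1 ler_wsqrtr.
have := hellinger_midpoint_ge (sqrt_unit a a01) (sqrt_unit b b01) (sqrtr_ge0 m).
rewrite !sqr_sqrtr ?(ltW m_gt0) //.
have -> : 2 * m = a + b by rewrite /m; field.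
lra.
Qed.

Lemma le_sqrt_01 [x] : 0 <= x <= 1 -> x <= Num.sqrt x.
Proof.
move=> /andP[x_ge0 x_le1]; have := sqr_sqrtr x_ge0; have := sqrtr_ge0 x.
have : Num.sqrt x <= 1 by rewrite -sqrtr1 ler_wsqrtr.
nra.
Qed.

Lemma xlnx_sub_le_sqrt a b : 0 <= a <= b -> b <= 1 ->
  `|b * ln b - a * ln a| <= 2 * Num.sqrt (b - a).
Proof.
move=> /andP[a_ge0 a_le_b] b_le1.
have ba_ge0 : 0 <= b - a by rewrite subr_ge0.
have lnb_le0 : ln b <= 0 := ln_le0 b_le1.
have le_sqrt : b - a <= Num.sqrt (b - a) by apply: le_sqrt_01; rewrite ba_ge0 /=; lra.
have split_b : b * ln b = a * ln b + (b - a) * ln b by ring.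
have := xlnx_ge ba_ge0; have := sqrtr_ge0 (b - a).
have [-> | a_neq0] := eqVneq a 0.
  rewrite mul0r !subr0 ler0_norm ?mulr_ge0_le0 //; lra.
have a_gt0 : 0 < a by rewrite lt_def a_neq0.
have b_gt0 : 0 < b by lra.
have lna_le : a * ln a <= a * ln b by rewrite ler_wpM2l // ler_ln ?posrE.
have lnb_le : a * ln b - a * ln a <= b - a.
  have := ler_wpM2l (ltW a_gt0) (ln_le_subr1 (divr_gt0 b_gt0 a_gt0)).
  by rewrite ln_div ?posrE // mulrBr mulrBr mulr1 mulrCA divff ?gt_eqF // mulr1.
have lnba_le : (b - a) * ln (b - a) <= (b - a) * ln b.
  have [-> | ba_neq0] := eqVneq (b - a) 0; first by rewrite !mul0r.
  have ba_gt0 : 0 < b - a by rewrite lt_def ba_neq0.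
  by rewrite ler_wpM2l // ler_ln ?posrE //; lra.
have : (b - a) * ln b <= 0 by rewrite mulr_ge0_le0.
move=> *; apply/ler_normlP; split; lra.
Qed.

Lemma xlnx_dist_le [a b] : 0 <= a <= 1 -> 0 <= b <= 1 ->
  `|a * ln a - b * ln b| <= 2 * Num.sqrt `|a - b|.
Proof.
move=> /andP[a_ge0 a_le1] /andP[b_ge0 b_le1].
have [a_le_b | b_lt_a] := leP a b.
  rewrite [`|a - b|]distrC [`|b - a|]ger0_norm ?subr_ge0 // distrC.
  by apply: xlnx_sub_le_sqrt; rewrite ?a_ge0.
rewrite [`|a - b|]ger0_norm ?subr_ge0 ?(ltW b_lt_a) //.
by apply: xlnx_sub_le_sqrt; rewrite ?b_ge0 ?(ltW b_lt_a).
Qed.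

End XlnX.

Section Distributions.
Variables (R : realType) (n : nat).
Implicit Types (P Q T : interp n -> R) (S : set (constraint R n)).

Lemma distr_in01 [P] v : is_distr P -> 0 <= P v <= 1.
Proof. by case=> P_ge0 <-; rewrite P_ge0 (bigD1 v) //= lerDl sumr_ge0. Qed.

Lemma eucl_dist_ge0 P Q : 0 <= eucl_dist P Q.
Proof. exact: sqrtr_ge0. Qed.

Lemma sqr_eucl_dist P Q : eucl_dist P Q ^+ 2 = \sum_v (P v - Q v) ^+ 2.
Proof. by rewrite sqr_sqrtr // sumr_ge0 // => v _; rewrite sqr_ge0. Qed.

Lemma eucl_distC P Q : eucl_dist P Q = eucl_dist Q P.
Proof. by rewrite /eucl_dist; under eq_bigr do rewrite -sqrrN opprB. Qed.

Lemma coord_le_eucl_dist P Q v : `|P v - Q v| <= eucl_dist P Q.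
Proof.
rewrite -sqrtr_sqr ler_wsqrtr // (bigD1 v) //= lerDl.
by rewrite sumr_ge0 // => w _; rewrite sqr_ge0.
Qed.

Lemma sqr_eucl_dist_triangle P Q T :
  eucl_dist P T ^+ 2 <= 2 * (eucl_dist P Q ^+ 2 + eucl_dist Q T ^+ 2).
Proof.
rewrite !sqr_eucl_dist -big_split mulr_sumr ler_sum // => v _ /=.
have := sqr_ge0 ((P v - Q v) - (Q v - T v)); nra.
Qed.

Lemma eucl_dist_le2 [P Q] : is_distr P -> is_distr Q -> eucl_dist P Q <= 2.
Proof.
move=> hP hQ; rewrite -[2]ger0_norm // -sqrtr_sqr ler_wsqrtr //.
apply: (@le_trans _ _ (\sum_v (P v + Q v))).
  apply: ler_sum => v _.
  have /andP[? ?] := distr_in01 v hP; have /andP[? ?] := distr_in01 v hQ; nra.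
by rewrite big_split /= hP.2 hQ.2; lra.
Qed.

Lemma entropyE P : entropy P = - \sum_v P v * ln (P v).
Proof. by congr -%R; apply: eq_bigr => v _; case: eqP => // ->; rewrite mul0r. Qed.

Lemma entropy_hoelder [P Q] : is_distr P -> is_distr Q ->
  `|entropy P - entropy Q| <= 2 * #|interp n|%:R * Num.sqrt (eucl_dist P Q).
Proof.
move=> hP hQ; rewrite !entropyE opprK addrC -sumrB.
have term_le v : `|Q v * ln (Q v) - P v * ln (P v)| <= 2 * Num.sqrt (eucl_dist P Q).
  apply: le_trans (xlnx_dist_le (distr_in01 v hQ) (distr_in01 v hP)) _.
  by rewrite ler_pM2l // ler_wsqrtr // distrC coord_le_eucl_dist.
apply: le_trans (ler_norm_sum _ _ _) _.
apply: le_trans (ler_sum _ (fun v _ => term_le v)) _.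
by rewrite sumr_const -[(2 * _) *+ _]mulr_natl mulrCA mulrA.
Qed.

Lemma Mod_conv [S P Q t] : 0 <= t <= 1 -> Mod S P -> Mod S Q ->
  Mod S (fun v => t * P v + (1 - t) * Q v).
Proof.
move=> /andP[t_ge0 t_le1] [[P_ge0 P_sum1] P_sat] [[Q_ge0 Q_sum1] Q_sat].
have t'_ge0 : 0 <= 1 - t by rewrite subr_ge0.
split; first split.
- by move=> v; rewrite addr_ge0 ?mulr_ge0.
- by rewrite big_split -!mulr_sumr P_sum1 Q_sum1 /=; ring.
move=> c Sc; have := P_sat c Sc; have := Q_sat c Sc; rewrite /satisfies.
set sP := \sum_(s <- _) _ * prob P _; set sQ := \sum_(s <- _) _ * prob Q _.
have -> : \sum_(s <- c_terms c) s.1 * prob (fun v => t * P v + (1 - t) * Q v) s.2 =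
    t * sP + (1 - t) * sQ.
  rewrite !mulr_sumr -big_split; apply: eq_bigr => s _.
  by rewrite /prob big_split -!mulr_sumr /=; ring.
move=> Q_c P_c; have -> : c_const c + (t * sP + (1 - t) * sQ) =
    t * (c_const c + sP) + (1 - t) * (c_const c + sQ) by ring.
by rewrite addr_ge0 ?mulr_ge0.
Qed.

Lemma ME_sqr_dist_le [S P Q] : is_ME S P -> Mod S Q ->
  eucl_dist P Q ^+ 2 <= 8 * (entropy P - entropy Q).
Proof.
move=> [MP P_max] MQ.
have half01 : 0 <= (2^-1 : R) <= 1 by apply/andP; split; lra.
have := P_max _ (Mod_conv half01 MP MQ).
have -> : (fun v => 2^-1 * P v + (1 - 2^-1) * Q v) = (fun v => (P v + Q v) / 2).
  by apply/funext => v; field.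
have : \sum_v (P v - Q v) ^+ 2 / 8 <= \sum_v (P v * ln (P v) + Q v * ln (Q v)
    - 2 * ((P v + Q v) / 2 * ln ((P v + Q v) / 2))).
  apply: ler_sum => v _.
  by apply: sqr_le_xlnx_midpoint; [exact: distr_in01 v MP.1 | exact: distr_in01 v MQ.1].
rewrite -mulr_suml -sqr_eucl_dist !big_split /= sumrN -mulr_sumr !entropyE.
lra.
Qed.

Definition blaschke_admissible (S1 S2 : set (interp n -> R)) (d : R) : Prop :=
  (forall P1, S1 P1 -> exists P2, S2 P2 /\ eucl_dist P1 P2 <= d) /\
  (forall P2, S2 P2 -> exists P1, S1 P1 /\ eucl_dist P2 P1 <= d).

Lemma blaschke_lt [S1 S2 : set (interp n -> R)] [e : R] :
  S1 `<=` @is_distr R n -> S2 `<=` @is_distr R n -> S1 !=set0 -> S2 !=set0 ->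
  blaschke S1 S2 < e -> exists2 d, blaschke_admissible S1 S2 d & d < e.
Proof.
move=> S1_distr S2_distr [P1 S1P1] [P2 S2P2]; apply: inf_lt.
exists 2; split=> [Q1 S1Q1 | Q2 S2Q2].
- by exists P2; split; last exact: eucl_dist_le2 (S1_distr _ S1Q1) (S2_distr _ S2P2).
- by exists P1; split; last exact: eucl_dist_le2 (S2_distr _ S2Q2) (S1_distr _ S1P1).
Qed.

Lemma ME_sqr_dist_le_admissible [S0 S1 P0 P1 d] :
  is_ME S0 P0 -> is_ME S1 P1 -> blaschke_admissible (Mod S1) (Mod S0) d ->
  eucl_dist P1 P0 ^+ 2 <= 2 * (d ^+ 2 + 32 * #|interp n|%:R * Num.sqrt d).
Proof.
move=> ME0 ME1 [near1 near0].
have [Q0 [MQ0 dQ0]] := near1 P1 ME1.1.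
have [Q1 [MQ1 dQ1]] := near0 P0 ME0.1.
have gap0 := ME_sqr_dist_le ME0 MQ0.
have max1 := ME1.2 Q1 MQ1.
have := entropy_hoelder ME0.1.1 MQ1.1; have := entropy_hoelder ME1.1.1 MQ0.1.
rewrite !ler_norml => /andP[_ H1] /andP[_ H0].
have N_ge0 : 0 <= 2 * #|interp n|%:R :> R by rewrite mulr_ge0 ?ler0n.
have := ler_wpM2l N_ge0 (ler_wsqrtr dQ0); have := ler_wpM2l N_ge0 (ler_wsqrtr dQ1).
have := sqr_eucl_dist_triangle P1 Q0 P0; rewrite (eucl_distC Q0).
have : eucl_dist P1 Q0 ^+ 2 <= d ^+ 2.
  by rewrite ler_pXn2r ?nnegrE ?eucl_dist_ge0 // (le_trans (eucl_dist_ge0 _ _) dQ0).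
lra.
Qed.

Lemma ME_sqr_dist_le_blaschke S0 S1 P0 P1 (e : R) :
  is_ME S0 P0 -> is_ME S1 P1 -> blaschke (Mod S1) (Mod S0) < e -> e <= 1 ->
  eucl_dist P1 P0 ^+ 2 <= 2 * (1 + 32 * #|interp n|%:R) * Num.sqrt e.
Proof.
move=> ME0 ME1 lt_e e_le1.
have Mod_distr S : Mod S `<=` @is_distr R n by move=> P [].
have [d adm d_lt_e] := blaschke_lt (Mod_distr _) (Mod_distr _)
  (ex_intro _ _ ME1.1) (ex_intro _ _ ME0.1) lt_e.
have [_ [_ /(le_trans (eucl_dist_ge0 _ _)) d_ge0]] := adm.2 _ ME0.1.
apply: le_trans (ME_sqr_dist_le_admissible ME0 ME1 adm) _.
have sqrt_le : Num.sqrt d <= Num.sqrt e by rewrite ler_wsqrtr // ltW.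
have d01 : 0 <= d <= 1 by rewrite d_ge0 /=; lra.
have := le_sqrt_01 d01; have : d ^+ 2 <= d by rewrite expr2; nra.
have N_ge0 : 0 <= #|interp n|%:R :> R by rewrite ler0n.
have := ler_wpM2l N_ge0 sqrt_le.
lra.
Qed.

End Distributions.

Lemma cvg0_of_sqrt_modulus {R : realType} (u b : nat -> R) (K : R) : 0 < K ->
  (forall i, 0 <= u i) -> b @ \oo --> 0 ->
  (forall i e, b i < e -> e <= 1 -> u i ^+ 2 <= K * Num.sqrt e) -> u @ \oo --> 0.
Proof.
move=> K_gt0 u_ge0 /cvgrPdist_lt b_cvg u_bound; apply/cvgrPdist_lt => eps eps_gt0.
pose c := eps ^+ 2 / (2 * K).
have c_gt0 : 0 < c by rewrite divr_gt0 ?exprn_gt0 ?mulr_gt0.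
pose e := Num.min 1 (c ^+ 2).
have e_gt0 : 0 < e by rewrite lt_min ltr01 exprn_gt0.
have e_le1 : e <= 1 by rewrite ge_min lexx.
have sqrt_e : Num.sqrt e <= c.
  by rewrite -[c]ger0_norm ?(ltW c_gt0) // -sqrtr_sqr ler_wsqrtr // ge_min lexx orbT.
apply: filterS (b_cvg _ e_gt0) => i; rewrite sub0r normrN => /(le_lt_trans (ler_norm _)).
move=> /(u_bound i _)/(_ e_le1) ui_bound; rewrite sub0r normrN ger0_norm //.
have : K * Num.sqrt e <= K * c by rewrite ler_wpM2l // ltW.
have -> : K * c = eps ^+ 2 / 2 by rewrite /c; field; rewrite gt_eqF.
have := u_ge0 i; nra.
Qed.

Theorem lemma3 (R : realType) (n : nat)
  (R0 : set (constraint R n)) (Rs : nat -> set (constraint R n))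
  (P0 : interp n -> R) (Ps : nat -> interp n -> R) :
  consistent R0 ->
  (forall i, consistent (Rs i)) ->
  blaschke (Mod (Rs i)) (Mod R0) @[i --> \oo] --> 0 ->
  is_ME R0 P0 ->
  (forall i, is_ME (Rs i) (Ps i)) ->
  eucl_dist (Ps i) P0 @[i --> \oo] --> 0.
Proof.
(* Consistency is implied by the existence of the maximum-entropy distributions. *)
move=> _ _ blaschke_cvg ME0 MEs.
have N_ge0 : 0 <= #|interp n|%:R :> R by rewrite ler0n.
apply: (@cvg0_of_sqrt_modulus _ _ _ (2 * (1 + 32 * #|interp n|%:R)) _ _ blaschke_cvg).
- by rewrite mulr_gt0 //; lra.
- by move=> i; apply: eucl_dist_ge0.
- by move=> i e; apply: ME_sqr_dist_le_blaschke.
Qed.
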